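(* Consider a run of Algorithm 1 (described in the context) on the one-dimensional corrupted problem with absolute loss. For any interval $I_j$ appearing in the partition during the run: if $I_j$ is marked dubious, then $I_j$ is bisected after $O(\log T)$ queries on $I_j$; if $I_j$ is not marked dubious, then $I_j$ is bisected after $O(1)$ queries on $I_j$. Here a query on $I_j$ is a round in which $I_j$ is the partition interval containing the context, and the constants in $O(\cdot)$ are absolute.
   Context: Problem. Fix $L>0$ and $T\ge 2$. An adversary fixes an unknown $L$-Lipschitz $f:[0,1]\to[0,L]$. In each round $t=1,\dots,T$: the adversary chooses $x_t\in[0,1]$; the learner observes $x_t$ and guesses $q_t$; the adversary observes $q_t$ and sends $\sigma_t\in\{0,1\}$, equal to $\sigma(q_t-f(x_t))$ in uncorrupted rounds and $1-\sigma(q_t-f(x_t))$ in corrupted rounds, where $\sigma(u)=1$ if $u>0$ and $0$ if $u\le 0$; the adversary chooses adaptively which rounds to corrupt, at most $C$ in total ($C$ unknown to the learner). $\mathtt{len}(I)$ is the length of an interval $I$. $\mathtt{MidpointQuery}(I,Y)$, $Y=[a,b]$: guess $q=(a+b)/2$; if $\sigma_t=1$ return $Y\cap[0,q+L\,\mathtt{len}(I)]$, if $\sigma_t=0$ return $Y\cap[q-L\,\mathtt{len}(I),L]$. Algorithm 1. Maintain a partition of $[0,1]$ into intervals; each $I_j$ carries a checking interval $S_j$, range $Y_j$, and a ''dubious'' flag (initially unset). Initially: $8$ intervals of length $1/8$, each with $S_j=Y_j=[0,L]$. In round $t$, with $I_j$ the partition interval containing $x_t$: (i) if some endpoint of $S_j$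 has not been guessed in a round whose context lay in $I_j$, guess such an endpoint; if the guess was $\min(S_j)$ with $\sigma_t=1$ or $\max(S_j)$ with $\sigma_t=0$, mark $I_j$ dubious; once both endpoints have been queried, set $Y_j=[0,L]$ if dubious and otherwise $Y_j=[\min(S_j)-L\,\mathtt{len}(I_j),\max(S_j)+L\,\mathtt{len}(I_j)]\cap[0,L]$. (ii) Otherwise set $Y_j:=\mathtt{MidpointQuery}(I_j,Y_j)$; if then $\mathtt{len}(Y_j)<\max(4L\,\mathtt{len}(I_j),4L/T)$, bisect $I_j$ into its two halves, which replace it, each with checking interval equal to the current $Y_j$ (endpoints unqueried, not dubious). *)

From Stdlib Require Import Reals List Arith ZArith.
Open Scope R_scope.
Open Scope bool_scope.

Definition sig (u : R) : bool := if Rlt_dec 0 u then true else false.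
Definition Reqb (a b : R) : bool := if Req_dec_T a b then true else false.
Definition Rltb (a b : R) : bool := if Rlt_dec a b then true else false.

(* Dyadic intervals: node (k, i) is the interval [i/2^k, (i+1)/2^k]
   (half-open [i/2^k,(i+1)/2^k), except the last one which contains 1). *)
Definition node := (nat * nat)%type.
Definition node_eqb (a b : node) : bool :=
  Nat.eqb (fst a) (fst b) && Nat.eqb (snd a) (snd b).
Definition node_len (nd : node) : R := / (2 ^ fst nd).
Definition nfloor (y : R) : nat := Z.to_nat (up y - 1)%Z.
Definition idx (k : nat) (x : R) : nat := Nat.min (nfloor (x * 2 ^ k)) (2 ^ k - 1).
Definition contains (nd : node) (x : R) : bool := Nat.eqb (snd nd) (idx (fst nd) x).

(* closed intervals [a,b] represented by pairs (a,b) *)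
Definition ival := (R * R)%type.
Definition ilen (Y : ival) : R := snd Y - fst Y.

(* Per-interval data: checking interval S, range Y, which endpoints of S
   have been queried, dubious flag. *)
Record nodest := NodeSt { S_ : ival; Y_ : ival; qmin : bool; qmax : bool; dub : bool }.

(* The state: the current partition (list of active nodes) and the data of
   every node (kept after a node has been bisected). *)
Record state := State { part : list node; info : node -> nodest }.

Definition init_state (L : R) : state :=
  State (map (fun i => (3%nat, i)) (seq 0 8)) (fun _ => NodeSt (0, L) (0, L) false false false).

Definition cur (st : state) (x : R) : option node := find (fun nd => contains nd x) (part st).

Definition mid (Y : ival) : R := (fst Y + snd Y) / 2.
Definition midpoint_update (L lenI : R) (Y : ival) (s : bool) : ival :=
  let q := mid Y in
  if s then (fst Y, Rmin (snd Y) (q + L * lenI))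
  else (Rmax (fst Y) (q - L * lenI), snd Y).

Definition upd (info : node -> nodest) (nd : node) (r : nodest) : node -> nodest :=
  fun m => if node_eqb m nd then r else info m.

Definition range_after_check (L lenI : R) (S : ival) (d : bool) : ival :=
  if d then (0, L) else (Rmax 0 (fst S - L * lenI), Rmin L (snd S + L * lenI)).

Definition endpoint_update (L lenI : R) (r : nodest) (q : R) (s : bool) : nodest :=
  let S := S_ r in
  let qm := qmin r || Reqb q (fst S) in
  let qM := qmax r || Reqb q (snd S) in
  let d := dub r || (Reqb q (fst S) && s) || (Reqb q (snd S) && negb s) in
  let Y := if qm && qM then range_after_check L lenI S d else Y_ r in
  NodeSt S Y qm qM d.

Definition guess (st : state) (x : R) : R :=
  match cur st x with
  | None => 0
  | Some nd =>
      let r := info st nd in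
      if negb (qmin r) then fst (S_ r)
      else if negb (qmax r) then snd (S_ r)
      else mid (Y_ r)
  end.

Definition step (L : R) (T : nat) (st : state) (x : R) (s : bool) : state :=
  match cur st x with
  | None => st
  | Some nd =>
      let r := info st nd in
      let lenI := node_len nd in
      if negb (qmin r) then
        State (part st) (upd (info st) nd (endpoint_update L lenI r (fst (S_ r)) s))
      else if negb (qmax r) then
        State (part st) (upd (info st) nd (endpoint_update L lenI r (snd (S_ r)) s))
      else
        let Y' := midpoint_update L lenI (Y_ r) s in
        let r' := NodeSt (S_ r) Y' (qmin r) (qmax r) (dub r) in
        if Rltb (ilen Y') (Rmax (4 * L * lenI) (4 * L / INR T)) then
          let c1 := (S (fst nd), 2 * snd nd)%nat in
          let c2 := (S (fst nd), 2 * snd nd + 1)%nat in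
          let child := NodeSt Y' Y' false false false in
          State (c1 :: c2 :: filter (fun m => negb (node_eqb m nd)) (part st))
                (upd (upd (upd (info st) nd r') c1 child) c2 child)
        else State (part st) (upd (info st) nd r')
  end.

(* Feedback in round t: sigma(q_t - f(x_t)), flipped iff round t is corrupted
   (cs t = true). *)
Fixpoint run (L : R) (T : nat) (f : R -> R) (xs : nat -> R) (cs : nat -> bool)
  (n : nat) : state :=
  match n with
  | O => init_state L
  | S m =>
      let st := run L T f xs cs m in
      let q := guess st (xs m) in
      step L T st (xs m) (xorb (cs m) (sig (q - f (xs m))))
  end.

Fixpoint nqueries (L : R) (T : nat) (f : R -> R) (xs : nat -> R) (cs : nat -> bool)
  (nd : node) (n : nat) : nat :=
  match n with
  | O => O
  | S m =>
      nqueries L T f xs cs nd m +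
      (match cur (run L T f xs cs m) (xs m) with
       | Some nd' => if node_eqb nd' nd then 1 else 0
       | None => 0 end)
  end.

Definition is_active (st : state) (nd : node) : Prop := In nd (part st).

Fixpoint ncorrupt (cs : nat -> bool) (n : nat) : nat :=
  match n with O => O | S m => ncorrupt cs m + (if cs m then 1 else 0) end.

From Stdlib Require Import Reals List Lra Lia Arith.
Open Scope R_scope.

(* Every query on a partition interval [I] either queries one of the two endpoints of its
   checking interval [S] or is a midpoint query, and a midpoint query maps the excess
   [len(Y) - 2 L len(I)] to at most half of itself, whatever the (possibly corrupted)
   feedback.  After the check the excess is at most [L] if [I] is dubious and at most
   [len(S) <= max(8 L len(I), 4 L / T)] otherwise, while as long as [I] is not bisected
   [len(Y) >= max(4 L len(I), 4 L / T)], so the excess is at least half of this threshold.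
   Hence [q] queries on an unbisected [I] force [2^q <= 2 T] if [I] is dubious and
   [2^q <= 16] otherwise. *)

Lemma node_eqb_eq a b : node_eqb a b = true <-> a = b.
Proof.
  destruct a as [a1 a2], b as [b1 b2]; unfold node_eqb; simpl.
  rewrite Bool.andb_true_iff, !Nat.eqb_eq.
  split; [intros [-> ->] | intros E; inversion E]; auto.
Qed.

Lemma node_eqb_refl a : node_eqb a a = true.
Proof. apply node_eqb_eq; reflexivity. Qed.

Lemma node_eqb_neq a b : a <> b -> node_eqb a b = false.
Proof.
  intros Hne. destruct (node_eqb a b) eqn:E; [|reflexivity].
  apply node_eqb_eq in E. contradiction.
Qed.

Lemma node_eq_dec (a b : node) : {a = b} + {a <> b}.
Proof. decide equality; apply Nat.eq_dec. Defined.

Lemma upd_eq info nd r : upd info nd r nd = r.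
Proof. unfold upd. now rewrite node_eqb_refl. Qed.

Lemma upd_neq info nd r m : m <> nd -> upd info nd r m = info m.
Proof. intros Hne. unfold upd. now rewrite node_eqb_neq. Qed.

Lemma Reqb_refl a : Reqb a a = true.
Proof. unfold Reqb; destruct (Req_dec_T a a); congruence. Qed.

Lemma node_len_pos nd : 0 < node_len nd.
Proof. apply Rinv_0_lt_compat, pow_lt; lra. Qed.

Lemma node_len_child nd c : fst c = S (fst nd) -> node_len nd = 2 * node_len c.
Proof.
  intros Hk. unfold node_len. rewrite Hk. simpl. rewrite Rinv_mult.
  field. apply pow_nonzero; lra.
Qed.

Definition ancestor (m d : node) : Prop :=
  (fst m < fst d /\ snd d / 2 ^ (fst d - fst m) = snd m)%nat.

Definition is_child (nd c : node) : Prop := (fst c = S (fst nd) /\ snd c / 2 = snd nd)%nat.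

Lemma ancestor_trans a b c : ancestor a b -> ancestor b c -> ancestor a c.
Proof.
  intros [Hab Eab] [Hbc Ebc]. split; [lia|].
  replace (fst c - fst a)%nat with ((fst c - fst b) + (fst b - fst a))%nat by lia.
  rewrite Nat.pow_add_r, <- Nat.Div0.div_div, Ebc.
  exact Eab.
Qed.

Lemma child_ancestor nd c : is_child nd c -> ancestor nd c.
Proof.
  intros [Hk Hi]. split; [lia|].
  rewrite Hk, Nat.sub_succ_l, Nat.sub_diag by lia. exact Hi.
Qed.

Lemma ancestor_of_child m nd c : is_child nd c -> ancestor m c -> m = nd \/ ancestor m nd.
Proof.
  destruct m as [km im], nd as [k i]; intros [Hk Hi] [Hlt E]; simpl in *.
  rewrite Hk in Hlt, E.
  destruct (Nat.eq_dec km k) as [->|Hne].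
  - left. rewrite Nat.sub_succ_l, Nat.sub_diag in E by lia. simpl in E. congruence.
  - right. split; [simpl; lia|]. simpl.
    replace (S k - km)%nat with (1 + (k - km))%nat in E by lia.
    rewrite Nat.pow_add_r, <- Nat.Div0.div_div in E.
    simpl in E. rewrite Hi in E. exact E.
Qed.

Lemma bisection_children nd :
  is_child nd (S (fst nd), 2 * snd nd)%nat /\ is_child nd (S (fst nd), 2 * snd nd + 1)%nat.
Proof.
  split; split; cbn [fst snd]; try reflexivity.
  - rewrite Nat.mul_comm. apply Nat.div_mul; lia.
  - rewrite Nat.mul_comm, Nat.div_add_l by lia. simpl. lia.
Qed.

Lemma in_bisected_partition c1 c2 nd p m :
  In m (c1 :: c2 :: filter (fun m => negb (node_eqb m nd)) p) <->
  m = c1 \/ m = c2 \/ (In m p /\ m <> nd).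
Proof.
  simpl. rewrite filter_In.
  split; intros [E | [E | [Hm Hne]]]; auto; right; right; split; auto.
  - intros ->. now rewrite node_eqb_refl in Hne.
  - now rewrite node_eqb_neq.
Qed.

Lemma midpoint_update_excess L l Y s :
  ilen (midpoint_update L l Y s) - 2 * L * l <= (ilen Y - 2 * L * l) / 2.
Proof.
  unfold midpoint_update, mid, ilen; destruct s; simpl;
  [pose proof (Rmin_r (snd Y) ((fst Y + snd Y) / 2 + L * l))
  | pose proof (Rmax_r (fst Y) ((fst Y + snd Y) / 2 - L * l))]; lra.
Qed.

Lemma range_after_check_len L l S d :
  ilen (range_after_check L l S d) <= if d then L else ilen S + 2 * L * l.
Proof.
  unfold range_after_check, ilen; destruct d; simpl; [lra|].
  pose proof (Rmax_r 0 (fst S - L * l)). pose proof (Rmin_r L (snd S + L * l)). lra.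
Qed.

Lemma ln_le_compat x y : 0 < x -> x <= y -> ln x <= ln y.
Proof.
  intros Hx [Hlt | ->]; [left; now apply ln_increasing | apply Rle_refl].
Qed.

Lemma pow2_le_linear_log (q T : nat) : (2 <= T)%nat -> 2 ^ q <= 2 * INR T ->
  INR q < 10 * ln (INR T).
Proof.
  intros HT Hpow.
  assert (HT2 : 2 <= INR T) by (apply (le_INR 2) in HT; simpl in HT; lra).
  assert (Hln2 := ln_lt_2).
  assert (HlnT : ln 2 <= ln (INR T)) by (apply ln_le_compat; lra).
  assert (Hlog : INR q * ln 2 <= ln 2 + ln (INR T)).
  { rewrite <- ln_pow, <- ln_mult by lra. apply ln_le_compat; [apply pow_lt|]; lra. }
  nra.
Qed.

Section Invariant.

Variables (L : R) (T : nat).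
Hypothesis L_pos : 0 < L.
Hypothesis T_ge2 : (2 <= T)%nat.

Definition split_threshold (l : R) : R := Rmax (4 * L * l) (4 * L / INR T).
(* The checking interval of a child is the last range of its parent, which is shorter than
   the parent's split threshold. *)
Definition check_bound (l : R) : R := Rmax (8 * L * l) (4 * L / INR T).
Definition range_budget (l : R) (d : bool) : R := if d then L else check_bound l.

Lemma check_bound_pos l : 0 < l -> 0 < check_bound l.
Proof.
  intros Hl. eapply Rlt_le_trans; [|apply Rmax_l].
  assert (0 < L * l) by (apply Rmult_lt_0_compat; lra). lra.
Qed.

Lemma check_bound_le_split_threshold l : 0 < l -> check_bound l <= 2 * split_threshold l.
Proof.
  intros Hl. unfold check_bound, split_threshold. apply Rmax_lub.
  - pose proof (Rmax_l (4 * L * l) (4 * L / INR T)). lra.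
  - pose proof (Rmax_r (4 * L * l) (4 * L / INR T)).
    assert (0 < 4 * L / INR T) by (apply Rdiv_lt_0_compat; [lra | apply lt_0_INR; lia]). lra.
Qed.

(* [MidpointQuery] keeps at most half of [Y] plus [L len(I)], so whatever the feedback the
   excess [len(Y) - 2 L len(I)] at least halves with every midpoint query.  Right after the
   check it is at most [L] on a dubious interval and at most [len(S)] otherwise; the factor
   4 pays for the two endpoint queries counted in [q]. *)
Record node_inv (r : nodest) (q : nat) (l : R) : Prop := {
  check_len : ilen (S_ r) <= check_bound l;
  min_unqueried : qmin r = false -> qmax r = false /\ q = 0%nat;
  max_unqueried : qmax r = false -> (q <= 1)%nat;
  range_excess : qmin r = true -> qmax r = true ->
    (ilen (Y_ r) - 2 * L * l) * 2 ^ q <= 4 * range_budget l (dub r);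
  unsplit_len : (3 <= q)%nat -> split_threshold l <= ilen (Y_ r) }.

Lemma checked_range_excess l S d q : 0 < l -> ilen S <= check_bound l -> (q <= 2)%nat ->
  (ilen (range_after_check L l S d) - 2 * L * l) * 2 ^ q <= 4 * range_budget l d.
Proof.
  intros Hl HS Hq.
  assert (Hexcess : ilen (range_after_check L l S d) - 2 * L * l <= range_budget l d).
  { pose proof (range_after_check_len L l S d).
    assert (0 <= L * l) by (apply Rmult_le_pos; lra).
    unfold range_budget; destruct d; lra. }
  assert (Hbudget : 0 <= range_budget l d).
  { unfold range_budget; destruct d; [lra | apply Rlt_le, check_bound_pos, Hl]. }
  assert (Hpow : 0 < 2 ^ q <= 4).
  { split; [apply pow_lt; lra|]. replace 4 with (2 ^ 2) by lra. apply Rle_pow; [lra | exact Hq]. }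
  nra.
Qed.

Lemma node_inv_query_min r q l s : 0 < l -> node_inv r q l -> qmin r = false ->
  node_inv (endpoint_update L l r (fst (S_ r)) s) (q + 1) l.
Proof.
  intros Hl [HS Hmin _ _ _] Hqmin. destruct (Hmin Hqmin) as [Hqmax ->].
  unfold endpoint_update; rewrite Hqmin, Hqmax, Reqb_refl.
  split; cbn [S_ Y_ qmin qmax dub orb]; try easy; [|lia].
  intros _ ->. apply checked_range_excess; auto.
Qed.

Lemma node_inv_query_max r q l s : 0 < l -> node_inv r q l -> qmin r = true -> qmax r = false ->
  node_inv (endpoint_update L l r (snd (S_ r)) s) (q + 1) l.
Proof.
  intros Hl [HS _ Hmax _ _] Hqmin Hqmax. specialize (Hmax Hqmax).
  unfold endpoint_update; rewrite Hqmin, Hqmax, Reqb_refl.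
  split; cbn [S_ Y_ qmin qmax dub orb]; try easy; [|lia].
  intros _ _. apply checked_range_excess; auto; lia.
Qed.

Lemma node_inv_query_mid r q l s : node_inv r q l -> qmin r = true -> qmax r = true ->
  ~ ilen (midpoint_update L l (Y_ r) s) < split_threshold l ->
  node_inv (NodeSt (S_ r) (midpoint_update L l (Y_ r) s) (qmin r) (qmax r) (dub r)) (q + 1) l.
Proof.
  intros [HS _ _ Hexcess _] Hqmin Hqmax Hlen. specialize (Hexcess Hqmin Hqmax).
  pose proof (midpoint_update_excess L l (Y_ r) s).
  assert (0 < 2 ^ q) by (apply pow_lt; lra).
  split; simpl; try congruence.
  - intros _ _. rewrite Nat.add_1_r, <- tech_pow_Rmult. nra.
  - intros _. now apply Rnot_lt_le.
Qed.

Lemma node_inv_child nd c Y : is_child nd c -> ilen Y < split_threshold (node_len nd) ->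
  node_inv (NodeSt Y Y false false false) 0 (node_len c).
Proof.
  intros [Hk _] HY. rewrite (node_len_child nd c Hk) in HY.
  split; cbn [S_ Y_ qmin qmax]; try easy; [|intros; lia].
  unfold split_threshold, check_bound in *.
  replace (4 * L * (2 * node_len c)) with (8 * L * node_len c) in HY by ring. lra.
Qed.

Lemma node_inv_excess r q l : node_inv r q l -> (3 <= q)%nat ->
  split_threshold l / 2 * 2 ^ q <= 4 * range_budget l (dub r).
Proof.
  intros [_ Hmin Hmax Hexcess Hsplit] Hq.
  assert (Hqmin : qmin r = true)
    by (apply Bool.not_false_is_true; intros E; destruct (Hmin E); lia).
  assert (Hqmax : qmax r = true)
    by (apply Bool.not_false_is_true; intros E; specialize (Hmax E); lia).
  specialize (Hexcess Hqmin Hqmax). specialize (Hsplit Hq).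
  pose proof (Rmax_l (4 * L * l) (4 * L / INR T)).
  assert (0 < 2 ^ q) by (apply pow_lt; lra).
  unfold split_threshold in *. nra.
Qed.

Definition count_query (nq : node -> nat) (nd m : node) : nat :=
  (nq m + if node_eqb nd m then 1 else 0)%nat.

Lemma count_query_neq nq nd m : m <> nd -> count_query nq nd m = nq m.
Proof. intros Hne. unfold count_query. rewrite node_eqb_neq by auto. apply Nat.add_0_r. Qed.

(* A node becomes active only as a child of an active node, so [descendants_fresh] makes it
   start unqueried. *)
Record run_inv (st : state) (nq : node -> nat) : Prop := {
  descendants_fresh : forall m d, In m (part st) -> ancestor m d ->
    nq d = 0%nat /\ ~ In d (part st);
  active_node_inv : forall m, In m (part st) -> node_inv (info st m) (nq m) (node_len m) }.

Lemma run_inv_update st nq nd r : run_inv st nq -> In nd (part st) ->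
  node_inv r (nq nd + 1) (node_len nd) ->
  run_inv (State (part st) (upd (info st) nd r)) (count_query nq nd).
Proof.
  intros [Hfresh Hinv] Hnd Hr. split; cbn [part info].
  - intros m d Hm Hd. destruct (Hfresh m d Hm Hd) as [Hq Hnotin].
    rewrite count_query_neq; [auto | intros ->; contradiction].
  - intros m Hm. destruct (node_eq_dec m nd) as [-> | Hne].
    + unfold count_query. now rewrite upd_eq, node_eqb_refl.
    + rewrite upd_neq, count_query_neq by auto. auto.
Qed.

Section Bisection.

Variables (st : state) (nq : node -> nat) (nd c1 c2 : node).
Hypothesis Hinv : run_inv st nq.
Hypothesis Hnd : In nd (part st).
Hypothesis Hc1 : is_child nd c1.
Hypothesis Hc2 : is_child nd c2.
Hypothesis Hc12 : c1 <> c2.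

Let new_part := c1 :: c2 :: filter (fun m => negb (node_eqb m nd)) (part st).

Lemma child_fresh c : is_child nd c -> nq c = 0%nat /\ ~ In c (part st).
Proof. intros Hc. exact (descendants_fresh _ _ Hinv nd c Hnd (child_ancestor nd c Hc)). Qed.

Lemma bisection_descendants_fresh m d : In m new_part -> ancestor m d ->
  nq d = 0%nat /\ ~ In d (part st) /\ d <> nd /\ d <> c1 /\ d <> c2.
Proof.
  intros Hm Hd. pose proof Hm as Hm'. apply in_bisected_partition in Hm'.
  destruct Hc1 as [Hk1 _], Hc2 as [Hk2 _].
  assert (Hold : exists m0, In m0 (part st) /\ ancestor m0 d).
  { destruct Hm' as [-> | [-> | [Hm' _]]]; eauto using ancestor_trans, child_ancestor. }
  destruct Hold as [m0 [Hm0 Hd0]].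
  destruct (descendants_fresh _ _ Hinv m0 d Hm0 Hd0) as [Hq Hnotin].
  assert (Hnot_child : forall c, is_child nd c -> d <> c).
  { intros c Hc ->. destruct (ancestor_of_child m nd c Hc Hd) as [-> | Hmnd].
    - destruct Hm' as [-> | [-> | [_ Hne]]]; [lia | lia | contradiction].
    - destruct Hm' as [-> | [-> | [Hm' _]]]; [destruct Hmnd; lia | destruct Hmnd; lia |].
      destruct (descendants_fresh _ _ Hinv m nd Hm' Hmnd). contradiction. }
  repeat split; auto; intros ->; contradiction.
Qed.

Lemma run_inv_bisect r Y : ilen Y < split_threshold (node_len nd) ->
  run_inv (State new_part
    (upd (upd (upd (info st) nd r) c1 (NodeSt Y Y false false false)) c2
       (NodeSt Y Y false false false)))
    (count_query nq nd).
Proof.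
  intros HY. destruct (child_fresh c1 Hc1) as [Hq1 Hnotin1].
  destruct (child_fresh c2 Hc2) as [Hq2 Hnotin2].
  assert (Hne1 : c1 <> nd) by (destruct Hc1; intros ->; lia).
  assert (Hne2 : c2 <> nd) by (destruct Hc2; intros ->; lia).
  split; cbn [part info].
  - intros m d Hm Hd.
    destruct (bisection_descendants_fresh m d Hm Hd) as [Hq [Hnotin [Hdnd [Hd1 Hd2]]]].
    rewrite count_query_neq by auto. split; [auto|].
    unfold new_part. rewrite in_bisected_partition. tauto.
  - intros m Hm. apply in_bisected_partition in Hm.
    destruct Hm as [-> | [-> | [Hm Hne]]].
    + rewrite upd_neq, upd_eq, count_query_neq, Hq1 by auto. eapply node_inv_child; eauto.
    + rewrite upd_eq, count_query_neq, Hq2 by auto. eapply node_inv_child; eauto.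
    + assert (m <> c1) by (intros ->; contradiction).
      assert (m <> c2) by (intros ->; contradiction).
      rewrite !upd_neq, count_query_neq by auto. apply (active_node_inv _ _ Hinv m Hm).
Qed.

End Bisection.

Lemma run_inv_step st nq x s : run_inv st nq ->
  run_inv (step L T st x s)
    (fun m => (nq m + match cur st x with
                      | Some nd' => if node_eqb nd' m then 1 else 0
                      | None => 0 end)%nat).
Proof.
  intros Hinv. unfold step. destruct (cur st x) as [nd|] eqn:Hcur.
  2: { destruct Hinv as [Hfresh Hact]. split; intros; rewrite Nat.add_0_r; eauto. }
  assert (Hnd : In nd (part st)) by (apply find_some in Hcur; tauto).
  pose proof (active_node_inv _ _ Hinv nd Hnd) as Hr.
  pose proof (node_len_pos nd) as Hl.
  cbv zeta. destruct (qmin (info st nd)) eqn:Hqmin; [destruct (qmax (info st nd)) eqn:Hqmax|];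
    cbn [negb]; [| apply run_inv_update; auto; now apply node_inv_query_max
                 | apply run_inv_update; auto; now apply node_inv_query_min].
  unfold Rltb. destruct (Rlt_dec _ _) as [Hsplit | Hnosplit].
  - destruct (bisection_children nd) as [Hc1 Hc2].
    apply run_inv_bisect; auto. intros E; injection E; lia.
  - apply run_inv_update; auto.
    pose proof (node_inv_query_mid _ _ _ s Hr Hqmin Hqmax Hnosplit) as Hmid.
    now rewrite Hqmin, Hqmax in Hmid.
Qed.

Lemma run_inv_init : run_inv (init_state L) (fun _ => 0%nat).
Proof.
  assert (Hlevel : forall m, In m (part (init_state L)) -> fst m = 3%nat).
  { intros m Hm. apply in_map_iff in Hm. now destruct Hm as [i [<- _]]. }
  split.
  - intros m d Hm Hd. split; [reflexivity|]. intros Hd'.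
    apply Hlevel in Hm, Hd'. destruct Hd. lia.
  - intros [k i] Hm. apply Hlevel in Hm. cbn in Hm. subst k.
    split; cbn; try easy; [|intros; lia].
    unfold ilen, check_bound, node_len. cbn. eapply Rle_trans; [|apply Rmax_l]. lra.
Qed.

Lemma run_inv_run f xs cs n : run_inv (run L T f xs cs n) (fun m => nqueries L T f xs cs m n).
Proof. induction n; [apply run_inv_init | apply run_inv_step, IHn]. Qed.

Lemma dubious_queries_lt r q l : 0 < l -> node_inv r q l -> dub r = true ->
  INR q < 10 * ln (INR T).
Proof.
  intros Hl Hr Hd. apply pow2_le_linear_log; [exact T_ge2|].
  assert (HT : 2 <= INR T) by (apply (le_INR 2) in T_ge2; simpl in T_ge2; lra).
  destruct (le_lt_dec 3 q) as [Hq | Hq].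
  - pose proof (node_inv_excess r q l Hr Hq) as Hexcess.
    unfold range_budget in Hexcess. rewrite Hd in Hexcess.
    assert (0 < 2 ^ q) by (apply pow_lt; lra).
    unfold split_threshold in Hexcess.
    assert (Hth : 4 * L <= Rmax (4 * L * l) (4 * L / INR T) * INR T).
    { replace (4 * L) with (4 * L / INR T * INR T) at 1 by (field; lra).
      apply Rmult_le_compat_r; [lra | apply Rmax_r]. }
    nra.
  - assert (2 ^ q <= 2 ^ 2) by (apply Rle_pow; [lra | lia]). lra.
Qed.

Lemma checked_queries_lt r q l : 0 < l -> node_inv r q l -> dub r = false -> (q < 5)%nat.
Proof.
  intros Hl Hr Hd. destruct (le_lt_dec 3 q) as [Hq | Hq]; [|lia].
  pose proof (node_inv_excess r q l Hr Hq) as Hexcess.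
  unfold range_budget in Hexcess. rewrite Hd in Hexcess.
  pose proof (check_bound_le_split_threshold l Hl).
  pose proof (check_bound_pos l Hl).
  destruct (le_lt_dec 5 q) as [H5 | H5]; [exfalso | exact H5].
  assert (2 ^ 5 <= 2 ^ q) by (apply Rle_pow; [lra | exact H5]).
  simpl in *. nra.
Qed.

End Invariant.

Theorem lemma21 :
  exists c_dub c_ok : R, 0 < c_dub /\ 0 < c_ok /\
  forall (L : R) (T C : nat) (f : R -> R) (xs : nat -> R) (cs : nat -> bool),
    0 < L -> (2 <= T)%nat ->
    (forall x y, 0 <= x <= 1 -> 0 <= y <= 1 -> Rabs (f x - f y) <= L * Rabs (x - y)) ->
    (forall x, 0 <= x <= 1 -> 0 <= f x <= L) ->
    (forall t, 0 <= xs t <= 1) ->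
    (ncorrupt cs T <= C)%nat ->
    forall (nd : node) (n : nat), (n <= T)%nat ->
      let st := run L T f xs cs n in
      let k := INR (nqueries L T f xs cs nd n) in
      (dub (info st nd) = true -> c_dub * ln (INR T) <= k -> ~ is_active st nd) /\
      (dub (info st nd) = false -> c_ok <= k -> ~ is_active st nd).
Proof.
  exists 10, 5. split; [lra|]. split; [lra|].
  intros L T C f xs cs HL HT _ _ _ _ nd n _ st k.
  assert (Hnode : is_active st nd ->
    node_inv L T (info st nd) (nqueries L T f xs cs nd n) (node_len nd))
    by exact (active_node_inv _ _ _ _ (run_inv_run L T HL HT f xs cs n) nd).
  pose proof (node_len_pos nd) as Hl.
  split; intros Hd Hk Hact.
  - pose proof (dubious_queries_lt L T HL HT _ _ _ Hl (Hnode Hact) Hd).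
    unfold k in Hk. lra.
  - pose proof (checked_queries_lt L T HL HT _ _ _ Hl (Hnode Hact) Hd) as Hq.
    apply lt_INR in Hq. unfold k in Hk. simpl in Hq. lra.
Qed.
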